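(* Fix a full realization $\mathbf{y}_{\mathcal{W}}$ of the profiles and bids $b$. For every user $s$ selected by the allocation policy of \textsc{SeqTGreedy}, the payment $\theta^d_s(\mathbf{y}_{\mathcal{W}})$ (defined in the context) is individually rational: $\theta^d_s(\mathbf{y}_{\mathcal{W}})\ge b_s$.
   Context: Setting. $\mathcal{V}$ is a finite set and $f:2^{\mathcal{V}}\to\mathbb{R}_{\ge0}$ is monotone and submodular. $\mathcal{W}$ is a finite set of users and $\mathcal{O}\subseteq 2^{\mathcal{V}}$. Each user $w$ has a random sensing profile $Y_w$ with values in $\mathcal{O}$; the $Y_w$ are independent with known distributions. For $\mathcal{S}\subseteq\mathcal{W}$ and values $y_s$, write $\mathbf{y}_{\mathcal{S}}=\{(s,y_s):s\in\mathcal{S}\}$ and $g(\mathbf{y}_{\mathcal{S}})=f(\bigcup_{s\in\mathcal{S}}y_s)$. The conditional expected marginal gain is $\Delta_g(w\mid\mathbf{y}_{\mathcal{S}})=\sum_{y\in\mathcal{O}}P(Y_w=y\mid\mathbf{y}_{\mathcal{S}})\,[g(\mathbf{y}_{\mathcal{S}}\cup\{(w,y)\})-g(\mathbf{y}_{\mathcal{S}})]$. Users report bids $b_w\ge 0$; budget $\mathcal{B}>0$, parameter $\alpha\ge1$. Allocation policy of \textsc{SeqTGreedy}. Set $\mathcal{S}=\emptyset$, $\mathbf{y}_{\mathcal{S}}=\emptyset$, $\mathcal{W}'=\mathcal{W}$. While $\mathcal{W}'\ne\emptyset$: let $w^*\in\arg\max_{w\in\mathcal{W}'}\Delta_g(w\mid\mathbf{y}_{\mathcal{S}})/b_w$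 and $\Delta_{w^*}=\Delta_g(w^*\mid\mathbf{y}_{\mathcal{S}})$. If $\sum_{s\in\mathcal{S}}b_s+b_{w^*}\le\mathcal{B}$: if moreover $b_{w^*}\le\frac{\mathcal{B}}{\alpha}\cdot\frac{\Delta_{w^*}}{\sum_{s\in\mathcal{S}}\Delta_s+\Delta_{w^*}}$ then add $w^*$ to $\mathcal{S}$ (recording $\Delta_{w^*}$), observe $y_{w^*}$ (its value in the fixed realization), add $(w^*,y_{w^*})$ to $\mathbf{y}_{\mathcal{S}}$, remove $w^*$ from $\mathcal{W}'$; otherwise stop. If the budget test fails, remove $w^*$ from $\mathcal{W}'$. Payment $\theta^d_i(\mathbf{y}_{\mathcal{W}})$. Let $\mathcal{S}=\{1,\dots,k\}$ be the selected users in order. For $i\in\mathcal{S}$, run the policy on $\mathcal{W}\setminus\{i\}$ with the same bids and realization, obtaining $\mathcal{S}'=\{1,\dots,k'\}$ in order with recorded marginals $\Delta'_j$; index $k'+1$ refers to the next (first unallocated) user considered by this run. For $j\in\{1,\dots,k'+1\}$ let $\Delta_{i(j)}$ be the expected marginal gain of $i$ given the observations of users $1,\dots,j-1$ of $\mathcal{S}'$, $b_{i(j)}=\Delta_{i(j)}b_j/\Delta'_j$, $\rho_{i(j)}=\frac{\mathcal{B}}{\alpha}\cdot\frac{\Delta_{i(j)}}{\sum_{s'=1}^{j-1}\Delta'_{s'}+\Delta_{i(j)}}$, $\theta^d_{i(j)}=\min(b_{i(j)},\rho_{i(j)})$, and $\theta^d_i(\mathbf{y}_{\mathcal{W}})=\max_{j}\theta^d_{i(j)}$.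 *)

From mathcomp Require Import all_boot all_order all_algebra.
Set Implicit Arguments. Unset Strict Implicit. Unset Printing Implicit Defensive.
Import Order.TTheory GRing.Theory Num.Theory.
Local Open Scope ring_scope.

Section SeqTGreedy.
Variables (R : realFieldType) (V W : finType).
Variable f : {set V} -> R.
Variable O : {set {set V}}.                (* possible sensing profiles *)
Variable p : W -> {set V} -> R.            (* marginal law of Y_w *)
Variable y : W -> {set V}.                 (* the fixed full realization y_W *)
Variable b : W -> R.
Variables (Bud alpha : R).

(* Joint law of the independent profiles (Y_w)_w : product of the marginals. *)
Definition joint (yy : {ffun W -> {set V}}) : R := \prod_(w : W) p w (yy w).

Definition agrees (S : seq W) (yy : {ffun W -> {set V}}) : bool :=
  all (fun s => yy s == y s) S.

Definition cond_prob (S : seq W) (w : W) (Y : {set V}) : R :=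
  (\sum_(yy | agrees S yy && (yy w == Y)) joint yy) /
  (\sum_(yy | agrees S yy) joint yy).

Definition gobs (S : seq W) : {set V} := \bigcup_(s <- S) y s.

Definition gain (S : seq W) (w : W) : R :=
  \sum_(Y in O) cond_prob S w Y * (f (gobs S :|: Y) - f (gobs S)).

Definition ratio (S : seq W) (w : W) : R := gain S w / b w.

(* The argmax of Delta/b over A, ties broken by the (fixed) enumeration order
   of the finite type W. *)
Definition best (A : {set W}) (S : seq W) : option W :=
  [pick w in A | [forall v in A,
      (ratio S v < ratio S w) ||
      ((ratio S v == ratio S w) && (enum_rank w <= enum_rank v)%N)]].

(* S : selected users so far (in order), D : sum of their recorded marginals.
   Returns the selected users (in order) and, if the run stopped because the
   threshold test failed, the user w* at which it stopped. *)
Fixpoint run (n : nat) (A : {set W}) (S : seq W) (D : R) : seq W * option W :=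
  match n with
  | 0 => (S, None)
  | n'.+1 =>
    match best A S with
    | None => (S, None)
    | Some w =>
      if \sum_(s <- S) b s + b w <= Bud then
        if b w <= Bud / alpha * (gain S w / (D + gain S w)) then
          run n' (A :\ w) (rcons S w) (D + gain S w)
        else (S, Some w)
      else run n' (A :\ w) S D
    end
  end.

(* The allocation of SeqTGreedy on the users in A (each iteration removes one
   user from the candidate set, so #|W| iterations suffice). *)
Definition policy (A : {set W}) : seq W * option W := run #|W| A [::] 0.

Definition selected : seq W := (policy [set: W]).1.

(* (x0 is only a default value for nth, irrelevant since k < j <= size S') *)
Definition rec_sum (x0 : W) (S' : seq W) (j : nat) : R :=
  \sum_(k < j) gain (take k S') (nth x0 S' k).

(* theta^d_{i(j)} for j = 0 .. size S' (0-indexed: j corresponds to the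
   paper's j+1).  A competitor with zero recorded marginal, or a missing
   (k'+1)-th user, means b_{i(j)} = +oo, so theta_{i(j)} = rho_{i(j)}. *)
Definition theta_ij (i : W) (S' : seq W) (nxt : option W) (j : nat) : R :=
  let pre := take j S' in
  let Di := gain pre i in
  let rho := Bud / alpha * (Di / (rec_sum i S' j + Di)) in
  let comp := if (j < size S')%N then Some (nth i S' j) else nxt in
  match comp with
  | Some u =>
      let Du := gain pre u in
      if Du != 0 then Num.min (Di * b u / Du) rho else rho
  | None => rho
  end.

Definition payment (i : W) : R :=
  let r := policy [set~ i] in
  \big[Num.max/theta_ij i r.1 r.2 0]_(j < (size r.1).+1) theta_ij i r.1 r.2 j.

End SeqTGreedy.

From Pilot Require Import Defs.
From mathcomp Require Import all_boot all_order all_algebra.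
Set Implicit Arguments. Unset Strict Implicit. Unset Printing Implicit Defensive.
Import Order.TTheory GRing.Theory Num.Theory.
Local Open Scope ring_scope.

(* Removing a selected user s from the candidate pool does not change the run
   before s is picked: every other argmax of Delta/b stays the argmax once s is
   removed.  So the run without s passes through the state (S, D) at which s was
   selected.  There s maximised Delta/b among the remaining candidates, hence
   b_s <= Delta_s b_u / Delta_u for the next user u considered by the run without
   s, and s passed the threshold test, hence b_s <= rho.  Thus b_s is bounded by
   theta^d_{s(j)} for j = |S| + 1, and so by the payment. *)

Section SeqTGreedyIR.
Variables (R : realFieldType) (V W : finType).
Variables (f : {set V} -> R) (O : {set {set V}}) (p : W -> {set V} -> R)
  (y : W -> {set V}) (b : W -> R) (Bud alpha : R).
Hypothesis f_mono : forall A B : {set V}, A \subset B -> f A <= f B.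
Hypothesis p_ge0 : forall w Y, 0 <= p w Y.
Hypothesis b_gt0 : forall w, 0 < b w.

Local Notation run := (Defs.run f O p y b Bud alpha).
Local Notation best := (Defs.best f O p y b).
Local Notation ratio := (Defs.ratio f O p y b).
Local Notation gain := (Defs.gain f O p y).
Local Notation rec_sum := (Defs.rec_sum f O p y).

Definition threshold (S : seq W) (D : R) (w : W) : R :=
  Bud / alpha * (gain S w / (D + gain S w)).

(* theta^d_{i(j)} evaluated at the state (S, D) reached after j - 1 selections,
   with c the j-th user considered by the run without i. *)
Definition theta_at (i : W) (S : seq W) (D : R) (c : option W) : R :=
  match c with
  | Some u => if gain S u != 0
              then Num.min (gain S i * b u / gain S u) (threshold S D i)
              else threshold S D i
  | None => threshold S D i
  end.

Lemma gain_ge0 S w : 0 <= gain S w.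
Proof.
apply: sumr_ge0 => Y _; apply: mulr_ge0; last first.
  by rewrite subr_ge0 f_mono // subsetUl.
by apply: divr_ge0; apply: sumr_ge0 => yy _; apply: prodr_ge0.
Qed.

Lemma best_mem A S w : best A S = Some w -> w \in A.
Proof. by rewrite /Defs.best; case: pickP => // x /andP[xA _] [<-]. Qed.

Lemma ratio_le_best A S w u : best A S = Some w -> u \in A -> ratio S u <= ratio S w.
Proof.
rewrite /Defs.best; case: pickP => // x /andP[_ /forall_inP Hx] [<-] uA.
by case/orP: (Hx u uA) => [/ltW //|/andP[/eqP -> _]].
Qed.

Lemma best_subset (A B : {set W}) S w :
  B \subset A -> w \in B -> best A S = Some w -> best B S = Some w.
Proof.
move=> sBA wB; rewrite /Defs.best; case: pickP => // x /andP[_ /forall_inP Hx] [xw].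
move: Hx; rewrite {}xw => Hw; case: pickP => [z /andP[zB /forall_inP Hz]|].
  have := Hz w wB; have := Hw z (subsetP sBA z zB).
  case/orP=> [lt1|/andP[/eqP e1 r1]]; case/orP=> [lt2|/andP[/eqP e2 r2]].
  - by have := lt_trans lt1 lt2; rewrite ltxx.
  - by move: lt1; rewrite e2 ltxx.
  - by move: lt2; rewrite e1 ltxx.
  - congr Some; apply: enum_rank_inj; apply: val_inj => /=.
    by apply/eqP; rewrite eqn_leq r1 r2.
move/(_ w); rewrite wB /=; case/negP; apply/forall_inP => v vB.
exact: Hw (subsetP sBA v vB).
Qed.

Lemma rec_sum_cat x S t j : (j <= size S)%N -> rec_sum x (S ++ t) j = rec_sum x S j.
Proof.
move=> hj; apply: eq_bigr => k _.
have hk : (k < size S)%N by apply: leq_trans (ltn_ord k) hj.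
by rewrite takel_cat 1?ltnW // nth_cat hk.
Qed.

Lemma rec_sum_rcons x S w :
  rec_sum x (rcons S w) (size (rcons S w)) = rec_sum x S (size S) + gain S w.
Proof.
rewrite -cats1 size_cat addn1 /Defs.rec_sum big_ord_recr /=.
rewrite take_size_cat // nth_cat ltnn subnn; congr (_ + _).
by apply: eq_bigr => k _; rewrite /= takel_cat 1?ltnW // nth_cat ltn_ord.
Qed.

Lemma theta_ij_cat i S rest nxt :
  theta_ij f O p y b Bud alpha i (S ++ rest) nxt (size S) =
  theta_at i S (rec_sum i S (size S)) (if rest is u :: _ then Some u else nxt).
Proof.
rewrite /theta_ij take_size_cat // rec_sum_cat // size_cat -{1}[size S]addn0.
by rewrite ltn_add2l; case: rest => [|u rest]; rewrite // nth_cat ltnn subnn.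
Qed.

(* The next user considered is the first later selection, or else the user at
   which the run stopped. *)
Lemma run_next_mem n A S D : exists rest,
  (run n A S D).1 = S ++ rest /\
  forall u, (if rest is v :: _ then Some v else (run n A S D).2) = Some u -> u \in A.
Proof.
elim: n A S D => [|n IH] A S D /=; first by exists [::]; rewrite cats0.
case Hb: (best A S) => [w|]; last by exists [::]; rewrite cats0.
have wA := best_mem Hb.
case: ifP => _; [case: ifP => _|].
- have [rest [-> _]] := IH (A :\ w) (rcons S w) (D + gain S w).
  by exists (w :: rest); rewrite cat_rcons; split => // u [<-].
- by exists [::]; rewrite cats0; split => // u [<-].
- have [rest [-> Hnext]] := IH (A :\ w) S D.
  by exists rest; split => // u /Hnext; rewrite in_setD1 => /andP[].
Qed.

Lemma run_notin_pool n (A : {set W}) S D s :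
  s \notin A -> s \notin S -> s \notin (run n A S D).1.
Proof.
elim: n A S D => [|n IH] A S D sA sS //=.
case Hb: (best A S) => [w|] //.
have sAw : s \notin A :\ w by rewrite in_setD1 negb_and sA orbT.
case: ifP => _; [case: ifP => _|]; last exact: IH.
- apply: IH => //; rewrite mem_rcons in_cons negb_or sS andbT.
  by apply: contraNneq sA => ->; apply: best_mem Hb.
- exact: sS.
Qed.

Lemma run_setD1_reaches_selection s n A S D :
  s \in (run n A S D).1 -> s \notin S -> D = rec_sum s S (size S) ->
  exists n0 A0 S0 D0, [/\ run n (A :\ s) S D = run n0 (A0 :\ s) S0 D0,
    best A0 S0 = Some s, b s <= threshold S0 D0 s & D0 = rec_sum s S0 (size S0)].
Proof.
elim: n A S D => [|n IH] A S D /=; first by move=> ->.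
case Hb: (best A S) => [w|]; last by move=> /= ->.
have [<-|Nws] := eqVneq w s.
  case: ifP => Hbud; [case: ifP => Hth|] => sel sS HD.
  - by exists n.+1, A, S, D.
  - by move: sel sS => /= ->.
  - by rewrite (negPf (run_notin_pool n D _ sS)) ?setD11 in sel.
have wAs : w \in A :\ s by rewrite in_setD1 Nws (best_mem Hb).
rewrite (best_subset (subD1set A s) wAs Hb) [A :\ s :\ w]setDDl setUC -setDDl.
case: ifP => Hbud; [case: ifP => Hth|] => sel sS HD; last exact: IH.
- apply: IH sel _ _; first by rewrite mem_rcons in_cons negb_or eq_sym Nws.
  by rewrite rec_sum_rcons HD.
- by move: sel sS => /= ->.
Qed.

Lemma le_theta_at A S D s c :
  best A S = Some s -> b s <= threshold S D s ->
  (forall u, c = Some u -> u \in A) -> b s <= theta_at s S D c.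
Proof.
move=> bst th; case: c => [u /(_ u erefl) uA|_] //=.
case: ifP => // nz; rewrite le_min th andbT.
have gu_gt0 : 0 < gain S u by rewrite lt0r nz gain_ge0.
have := ratio_le_best bst uA.
rewrite /Defs.ratio ler_pdivlMr // mulrAC ler_pdivrMr // => h.
by rewrite ler_pdivlMr // mulrC.
Qed.

End SeqTGreedyIR.

Theorem lemma4 (R : realFieldType) (V W : finType)
  (f : {set V} -> R) (O : {set {set V}}) (p : W -> {set V} -> R)
  (y : W -> {set V}) (b : W -> R) (Bud alpha : R)
  (f_ge0 : forall A, 0 <= f A)
  (f_mono : forall A B : {set V}, A \subset B -> f A <= f B)
  (f_submod : forall (A B : {set V}) (x : V), A \subset B -> x \notin B ->
      f (x |: B) - f B <= f (x |: A) - f A)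
  (p_ge0 : forall w Y, 0 <= p w Y)
  (p_sum1 : forall w, \sum_(Y : {set V}) p w Y = 1)
  (p_supp : forall w Y, Y \notin O -> p w Y = 0)
  (y_in : forall w, y w \in O)
  (b_gt0 : forall w, 0 < b w)
  (Bud_gt0 : 0 < Bud) (alpha_ge1 : 1 <= alpha) :
  forall s : W, s \in selected f O p y b Bud alpha ->
    b s <= payment f O p y b Bud alpha s.
Proof.
move=> s sel.
have rec_sum0 : (0 : R) = rec_sum f O p y s [::] 0 by rewrite /rec_sum big_ord0.
have [n0 [A0 [S0 [D [Erun bst th HD]]]]] := run_setD1_reaches_selection sel isT rec_sum0.
have [rest [Esel Hnext]] := run_next_mem f O p y b Bud alpha n0 (A0 :\ s) S0 D.
rewrite /payment /policy.
have -> : [set~ s] = [set: W] :\ s by apply/setP => x; rewrite !inE andbT.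
rewrite Erun Esel.
have j_lt : (size S0 < (size (S0 ++ rest)).+1)%N by rewrite size_cat ltnS leq_addr.
apply: le_trans (le_bigmax _ _ (Ordinal j_lt)); rewrite /= theta_ij_cat -HD.
apply: le_theta_at bst th _ => // u /Hnext.
by rewrite in_setD1 => /andP[].
Qed.
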